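(* Assume that $\mathfrak{c} = 2^{<\mathfrak{c}}$ and that $\mathfrak{c}$ is a regular cardinal, where $\mathfrak{c}=|\mathbb{R}|$. Then there are $2^{2^{\mathfrak{c}}}$ many pairwise distinct $\sigma$-algebras on $\mathbb{R}$ each of which contains $[\mathbb{R}]^{\leq\omega}$.
   Context: $[\mathbb{R}]^{\leq\omega}$ denotes the family of all countable (finite or countably infinite) subsets of $\mathbb{R}$. $2^{<\mathfrak{c}} = \sup\{2^\lambda : \lambda<\mathfrak{c}\ \text{a cardinal}\}$. *)

From HB Require Import structures.
From mathcomp Require Import all_boot all_order all_algebra.
From mathcomp Require Import all_classical all_reals all_analysis.
Set Implicit Arguments. Unset Strict Implicit. Unset Printing Implicit Defensive.
Local Open Scope classical_set_scope.
Local Open Scope card_scope.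

(* Cardinals < c are exactly the cardinalities of subsets A of R with A not
   equinumerous to R; 2^|A| is the cardinality of the power set of A. *)
Definition c_eq_two_pow_lt_c (R : realType) : Prop :=
  forall A : set R, ~ (A #= [set: R]) -> [set B : set R | B `<=` A] #<= [set: R].

Definition c_regular (R : realType) : Prop :=
  forall (I : set R) (F : R -> set R),
    ~ (I #= [set: R]) -> (forall i, I i -> ~ (F i #= [set: R])) ->
    ~ ((\bigcup_(i in I) F i) #= [set: R]).

Definition sigma_algebras_with_countables (R : realType) : set (set (set R)) :=
  [set S | sigma_algebra [set: R] S /\ (forall A : set R, countable A -> S A)].
Arguments sigma_algebras_with_countables R : clear implicits.

From HB Require Import structures.
From mathcomp Require Import all_boot all_order all_algebra.
From mathcomp Require Import all_classical all_reals all_analysis.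
Import Order.TTheory GRing.Theory Num.Theory.
Local Open Scope classical_set_scope.
Local Open Scope card_scope.

(* Take a family (F_Y) of subsets of R, indexed by the 2^c sets Y of reals,
   such that no F_b is determined, up to a countable set, by countably many
   other members. For G a set of indices, the sets equal modulo a countable set
   to a set depending only on membership in countably many F_Y, Y in G, form a
   sigma-algebra containing the countable sets, and it contains F_Y exactly
   when Y is in G; so G |-> sigma_G is injective on the 2^(2^c) sets G.
   Such a family: code every pair (sequence of reals, sequence of booleans)
   by a real (possible since 2^aleph_0 <= c), and let F_Y be the set of codes
   of pairs (a, s) such that s records the membership of a in Y. *)

Lemma countableU {T} {A B : set T} :
  countable A -> countable B -> countable (A `|` B).
Proof.
move=> cA cB; rewrite -bigcup2E; apply: bigcup_countable => // -[|[|n]] _ //=.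
Qed.

Lemma countable_preimage {T U} {f : T -> U} {C : set U} :
  injective f -> countable C -> countable (f @^-1` C).
Proof.
move=> finj cC; apply: card_le_trans cC.
by apply: card_ge_preimage => x y _ _ /finj.
Qed.

Lemma card_le_inj {T U} (A : set T) (B : set U) (f : T -> U) :
  {in A &, injective f} -> f @` A `<=` B -> A #<= B.
Proof.
by move=> /inj_card_eq fA fAB; rewrite -(card_le_eql fA); exact: subset_card_le.
Qed.

Lemma uncountable_avoid {T U} {f g : T -> U} {C : set U} :
  ~ countable [set: T] -> injective f -> injective g -> countable C ->
  exists t, ~ C (f t) /\ ~ C (g t).
Proof.
move=> ucT finj ginj cC; apply: contrapT => avoidN; apply: ucT.
have cfg := countableU (countable_preimage finj cC) (countable_preimage ginj cC).
apply: sub_countable cfg; apply: subset_card_le => t _.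
by apply: contrapT => /not_orP [nfC ngC]; apply: avoidN; exists t.
Qed.

Definition symdiff {T} (A B : set T) := (A `\` B) `|` (B `\` A).

Lemma symdiffCC {T} (A B : set T) : symdiff (~` A) (~` B) = symdiff A B.
Proof. by rewrite /symdiff !setDE !setCK setUC setIC [B `&` _]setIC. Qed.

Lemma symdiff_bigcup {T} (A B : nat -> set T) :
  symdiff (\bigcup_n A n) (\bigcup_n B n) `<=` \bigcup_n symdiff (A n) (B n).
Proof.
move=> x [[[n _ Anx] nBx]|[[n _ Bnx] nAx]]; exists n => //.
  by left; split => // Bnx; apply: nBx; exists n.
by right; split => // Anx; apply: nAx; exists n.
Qed.

Section SigmaModCountable.
Context {T I : Type} (F : I -> set T).

Definition agree_on (N : set I) (x y : T) := forall i, N i -> (F i x <-> F i y).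

Definition saturated (N : set I) (B : set T) :=
  forall x y, agree_on N x y -> B x -> B y.

Definition independent_mod_countable := forall (N : set I) (b : I),
  countable N -> ~ N b -> forall C : set T, countable C ->
  exists y y', [/\ agree_on N y y', F b y, ~ F b y', ~ C y & ~ C y'].

Definition sigma_mod_countable (G : set I) : set (set T) :=
  [set E | exists N B,
    [/\ countable N, N `<=` G, saturated N B & countable (symdiff E B)]].

Lemma saturatedC N B : saturated N B -> saturated N (~` B).
Proof.
move=> satB x y xy nBx By; apply: nBx; apply: satB By => i Ni.
by rewrite (xy i Ni).
Qed.

Lemma saturated_bigcup (N : nat -> set I) (B : nat -> set T) :
  (forall n, saturated (N n) (B n)) ->
  saturated (\bigcup_n N n) (\bigcup_n B n).
Proof.
move=> satB x y xy [n _ Bnx]; exists n => //.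
by apply: satB Bnx => i Nni; apply: xy; exists n.
Qed.

Lemma sigma_algebra_mod_countable G :
  sigma_algebra [set: T] (sigma_mod_countable G).
Proof.
split.
- by exists set0, set0; split => //; rewrite /symdiff setD0 setU0.
- move=> E [N [B [cN NG satB cEB]]]; exists N, (~` B); split => //.
    exact: saturatedC.
  by rewrite setTD symdiffCC.
- move=> E /choice [N /choice [B EB]].
  exists (\bigcup_n N n), (\bigcup_n B n); split.
  + by apply: bigcup_countable => // n _; case: (EB n).
  + by move=> i [n _ Nni]; case: (EB n) => _ + _ _; exact.
  + by apply: saturated_bigcup => n; case: (EB n).
  + apply: sub_countable (subset_card_le (symdiff_bigcup _ _)) _.
    by apply: bigcup_countable => // n _; case: (EB n).
Qed.

Lemma sigma_mod_countable_countable G A : countable A -> sigma_mod_countable G A.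
Proof.
move=> cA; exists set0, set0; split => //.
by rewrite /symdiff set0D setD0 setU0.
Qed.

Lemma sigma_mod_countable_gen G i : G i -> sigma_mod_countable G (F i).
Proof.
move=> Gi; exists [set i], (F i); split => //.
- by move=> j ->.
- by move=> x y xy; apply: (xy i erefl).1.
- by rewrite /symdiff setDv setU0.
Qed.

Hypothesis F_indep : independent_mod_countable.

Lemma sigma_mod_countable_genN {G b} : ~ G b -> ~ sigma_mod_countable G (F b).
Proof.
move=> nGb [N [B [cN NG satB cFB]]].
have [y [y' [yy' Fy nFy' nCy nCy']]] := F_indep _ _ cN (nGb \o NG b) _ cFB.
have [By'|nBy'] := pselect (B y'); first by apply: nCy'; right.
apply: nCy; left; split => // By; apply: nBy'; apply: satB By.
exact: yy'.
Qed.

Lemma sigma_mod_countable_inj : injective sigma_mod_countable.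
Proof.
move=> G1 G2 eqG; apply/funext => i; apply/propext.
split => Gi; apply: contrapT => nGi; apply: (sigma_mod_countable_genN nGi).
  by rewrite -eqG; exact: sigma_mod_countable_gen.
by rewrite eqG; exact: sigma_mod_countable_gen.
Qed.

End SigmaModCountable.

Lemma exists_distinguishing_seq (T : pointedType) (N : set (set T)) b :
  countable N -> ~ N b ->
  exists w : nat -> T, forall Y, N Y -> exists n, ~ (Y (w n) <-> b (w n)).
Proof.
move=> /countable_injP [code codeI] nNb.
suff /choice [w Hw] : forall n, exists x,
    forall Y, N Y -> code Y = n -> ~ (Y x <-> b x).
  by exists w => Y NY; exists (code Y); exact: Hw.
move=> n; have [[Y [NY <-]]|nY] := pselect (exists Y, N Y /\ code Y = n).
  have [x Yxb] : exists x, ~ (Y x <-> b x).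
    apply: contrapT => /forallNP Yb; apply: nNb; suff <- : Y = b by [].
    by apply/funext => x; apply/propext; apply: contrapT; exact: Yb.
  by exists x => Y' NY' eqc; rewrite (codeI Y' Y) ?inE.
by exists point => Y NY cY; case: nY; exists Y.
Qed.

Section RealFamily.
Local Open Scope ring_scope.
Context {R : realType}.

Lemma realT_uncountable : ~ countable [set: R].
Proof.
move=> /countable_lebesgue_measure0.
have := lebesgue_measure_itv (Interval -oo%O +oo%O : interval R).
by rewrite set_itvNyy /= => ->.
Qed.

Lemma set_countType_inj (K : countType) :
  c_eq_two_pow_lt_c R -> exists g : set K -> R, injective g.
Proof.
move=> two_pow_le.
pose iota (k : K) : R := (pickle k)%:R.
have iotaI : injective iota.
  by move=> k k' /eqP; rewrite eqr_nat => /eqP /(pcan_inj pickleK).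
have ncA : ~ (range iota #= [set: R]).
  move=> /eq_countable eqA; apply: realT_uncountable; rewrite -eqA.
  exact: sub_countable (card_image_le _ _) _.
have /pcard_injP [h hI] : [set B | B `<=` range iota] #<= [set: R^o].
  exact: two_pow_le.
exists (fun S => h (iota @` S)) => S S' /hI eqS.
have {}eqS : iota @` S = iota @` S'.
  by apply: eqS; rewrite inE => _ [k _ <-]; exists k.
by apply/funext => k; rewrite -!(image_inj iotaI) eqS.
Qed.

Definition rat_cut (x : R) : set rat := [set q | ratr q < x].

Lemma rat_cut_inj : injective rat_cut.
Proof.
suff cut_le x y : rat_cut x = rat_cut y -> x <= y.
  by move=> x y eqxy; apply/eqP; rewrite eq_le !cut_le.
move=> eqxy; rewrite leNgt; apply/negP => /rat_in_itvoo [q].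
rewrite in_itv /= => /andP [yq qx].
have : rat_cut x q by [].
by rewrite eqxy /rat_cut /= => /(lt_trans yq); rewrite ltxx.
Qed.

Definition cut_code (z : (nat -> R) * (nat -> bool)) : set (nat * rat + nat) :=
  fun k => match k with inl (n, q) => rat_cut (z.1 n) q | inr n => z.2 n end.

Lemma cut_code_inj : injective cut_code.
Proof.
move=> [a s] [a' s'] eqz; have eqzk k := congr1 (fun P => P k) eqz.
congr pair; apply/funext => n.
  by apply: rat_cut_inj; apply/funext => q; exact: eqzk (inl (n, q)).
by have /= eqs := eqzk (inr n); apply/idP/idP; rewrite eqs.
Qed.

Lemma seq_pair_embedding :
  c_eq_two_pow_lt_c R ->
  exists enc : (nat -> R) * (nat -> bool) -> R, injective enc.
Proof.
move=> /(@set_countType_inj (nat * rat + nat)%type) [g gI].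
by exists (g \o cut_code) => z z' /gI /cut_code_inj.
Qed.

Definition samples (Y : set R) : set ((nat -> R) * (nat -> bool)) :=
  [set z : (nat -> R) * (nat -> bool) | forall n, Y (z.1 n) <-> z.2 n].

Lemma samples_independent (enc : (nat -> R) * (nat -> bool) -> R) :
  injective enc -> independent_mod_countable (fun Y => enc @` samples Y).
Proof.
move=> encI N b cN nNb C cC.
have [w wN] := @exists_distinguishing_seq R^o N b cN nNb.
pose probe (flip : bool) (r : R) : (nat -> R) * (nat -> bool) :=
  (fun n => if n is k.+1 then w k else r,
   fun n => if n is k.+1 then `[< b (w k) >] else `[< b r >] (+) flip).
have enc_samples Y z : (enc @` samples Y) (enc z) = samples Y z.
  exact: image_inj.
have probeN flip r Y : N Y -> ~ samples Y (probe flip r).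
  move=> /wN [n Ywb] /(_ n.+1) /=; rewrite asboolE; exact: Ywb.
have probe_false r : samples b (probe false r).
  by move=> [|n] /=; rewrite ?addbF asboolE.
have probe_true r : ~ samples b (probe true r).
  move=> /(_ 0%N) /=; rewrite addbT.
  by case: asboolP => br /= [brF Fbr]; [exact: notF (brF br) | exact/br/Fbr].
have probeI flip : injective (enc \o probe flip).
  by move=> r r' /encI /(congr1 (fun z => z.1 0%N)).
have [r [nCy nCy']] :=
  uncountable_avoid realT_uncountable (probeI false) (probeI true) cC.
exists (enc (probe false r)), (enc (probe true r)).
split => //; rewrite ?enc_samples //.
by move=> Y NY; rewrite !enc_samples; split => /(probeN _ _ _ NY).
Qed.

End RealFamily.

Theorem theorem3p10 (R : realType) :
  c_eq_two_pow_lt_c R -> c_regular R ->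
  sigma_algebras_with_countables R #= @setT (set (set R)).
Proof.
move=> two_pow_le _.
have [enc encI] := seq_pair_embedding two_pow_le.
pose F (Y : set R) := enc @` samples Y.
apply: Cantor_Bernstein; first exact: card_leT.
apply: (@card_le_inj _ _ _ _ (sigma_mod_countable F)).
- by move=> G G' _ _; apply/sigma_mod_countable_inj/samples_independent.
- move=> _ [G _ <-]; split; first exact: sigma_algebra_mod_countable.
  by move=> A; exact: sigma_mod_countable_countable.
Qed.
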